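(* Let $S$ be a right non-degenerate semigroup of skew type. Then for every $x,y\in S$ there exist $t,w\in S$ such that $|w|=|y|$ and $xw=yt$.
   Context: A semigroup of skew type is a monoid $S$ with a monoid presentation $S=\langle x_1,\ldots,x_n \mid x_ix_j=x_kx_l\rangle$ consisting of $\binom{n}{2}$ relations, each of the form $x_ix_j=x_kx_l$ with $i\neq j$, $k\neq l$, such that every word $x_px_q$ with $p\neq q$ appears (as one side) in exactly one of the relations; $X=\{x_1,\ldots,x_n\}$. Since relations are homogeneous, the length $|s|$ of $s\in S$ as a word in the generators is well defined. For $a,b\in X$, the partner of $ab$ is the other side of the unique defining relation containing $ab$ if $a\neq b$, and $ab$ itself if $a=b$. $S$ is right non-degenerate if for every $x\in X$ the map $X\to X$ sending $y$ to the first letter of the partner of $xy$ is surjective. *)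

From mathcomp Require Import all_boot.
Set Implicit Arguments. Unset Strict Implicit. Unset Printing Implicit Defensive.

(* Generators x_1..x_n are indexed by 'I_n; a word in the free monoid is a
   seq 'I_n. A defining relation x_i x_j = x_k x_l is a pair ((i,j),(k,l)). *)
Definition gen2 (n : nat) := ('I_n * 'I_n)%type.
Definition relation2 (n : nat) := (gen2 n * gen2 n)%type.

Definition skew_type (n : nat) (rels : seq (relation2 n)) : Prop :=
  [/\ size rels = 'C(n, 2),
      all (fun r : relation2 n => (r.1.1 != r.1.2) && (r.2.1 != r.2.2)) rels &
      forall p q : 'I_n, p != q ->
        count (fun r : relation2 n => (r.1 == (p, q)) || (r.2 == (p, q))) rels = 1].

(* Congruence on words generated by the relations: the monoid S is the
   quotient of seq 'I_n by this relation. *)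
Inductive rel_step (n : nat) (rels : seq (relation2 n)) : seq 'I_n -> seq 'I_n -> Prop :=
  | RStep u v (r : relation2 n) : r \in rels ->
      rel_step rels (u ++ [:: r.1.1; r.1.2] ++ v) (u ++ [:: r.2.1; r.2.2] ++ v).

Inductive congr_rel (n : nat) (rels : seq (relation2 n)) : seq 'I_n -> seq 'I_n -> Prop :=
  | CRefl w : congr_rel rels w w
  | CStep w1 w2 : rel_step rels w1 w2 -> congr_rel rels w1 w2
  | CSym w1 w2 : congr_rel rels w1 w2 -> congr_rel rels w2 w1
  | CTrans w1 w2 w3 : congr_rel rels w1 w2 -> congr_rel rels w2 w3 -> congr_rel rels w1 w3.

Definition partner (n : nat) (rels : seq (relation2 n)) (a b : 'I_n) : gen2 n :=
  if a == b then (a, b) else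
  let r := nth ((a, b), (a, b)) rels
               (find (fun r : relation2 n => (r.1 == (a, b)) || (r.2 == (a, b))) rels) in
  if r.1 == (a, b) then r.2 else r.1.

Definition right_nondegenerate (n : nat) (rels : seq (relation2 n)) : Prop :=
  forall x : 'I_n, forall z : 'I_n, exists y : 'I_n, (partner rels x y).1 = z.

(* Right non-degeneracy says that for generators a, b there is a generator c
   whose partner word a c begins with b, i.e. a c = b d in S.  Tiling a
   |x| by |y| grid with such squares, row by row, produces the words w and t
   with x w = y t, and w has one letter per column of the grid. *)

From mathcomp Require Import all_boot.

Section Congruence.
Variables (n : nat) (rels : seq (relation2 n)).

Lemma congr_rel_catl p {u v} : congr_rel rels u v -> congr_rel rels (p ++ u) (p ++ v).
Proof.
elim=> [w | w1 w2 [u' v' r rin] | w1 w2 _ IH | w1 w2 w3 _ IH1 _ IH2].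
- exact: CRefl.
- by apply: CStep; have := RStep (p ++ u') v' rin; rewrite -!catA.
- exact: CSym.
- exact: CTrans IH1 IH2.
Qed.

Lemma congr_rel_catr q {u v} : congr_rel rels u v -> congr_rel rels (u ++ q) (v ++ q).
Proof.
elim=> [w | w1 w2 [u' v' r rin] | w1 w2 _ IH | w1 w2 w3 _ IH1 _ IH2].
- exact: CRefl.
- by apply: CStep; rewrite -!catA; apply: RStep.
- exact: CSym.
- exact: CTrans IH1 IH2.
Qed.

Lemma congr_rel_relation (r : relation2 n) :
  r \in rels -> congr_rel rels [:: r.1.1; r.1.2] [:: r.2.1; r.2.2].
Proof. by move=> r_in; apply: CStep; apply: (RStep [::] [::] r_in). Qed.

Hypothesis square : forall a b : 'I_n, exists c d : 'I_n,
  congr_rel rels [:: a; c] [:: b; d].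

Lemma letter_right_multiple (a : 'I_n) (y : seq 'I_n) : exists t w : seq 'I_n,
  size w = size y /\ congr_rel rels (a :: w) (y ++ t).
Proof.
elim: y a => [|b y IH] a; first by exists [:: a], [::]; split; last exact: CRefl.
have [c [d ac_bd]] := square a b.
have [t [w [size_w dw_yt]]] := IH d.
exists t, (c :: w); split; first by rewrite /= size_w.
apply: (CTrans (w2 := b :: d :: w)); first exact: (congr_rel_catr w ac_bd).
exact: (congr_rel_catl [:: b] dw_yt).
Qed.

Lemma word_right_multiple (x y : seq 'I_n) : exists t w : seq 'I_n,
  size w = size y /\ congr_rel rels (x ++ w) (y ++ t).
Proof.
elim: x y => [|a x IH] y; first by exists [::], y; rewrite cats0; split; last exact: CRefl.
have [t1 [w1 [size_w1 aw1_yt1]]] := letter_right_multiple a y.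
have [t2 [w2 [size_w2 xw2_w1t2]]] := IH w1.
exists (t1 ++ t2), w2; split; first by rewrite size_w2.
apply: (CTrans (w2 := a :: w1 ++ t2)); first exact: (congr_rel_catl [:: a] xw2_w1t2).
by rewrite catA; apply: (congr_rel_catr t2 aw1_yt1).
Qed.

End Congruence.

Section SkewType.
Variables (n : nat) (rels : seq (relation2 n)).
Hypothesis skew : skew_type rels.

Lemma partner_congr (a c : 'I_n) :
  congr_rel rels [:: a; c] [:: (partner rels a c).1; (partner rels a c).2].
Proof.
rewrite /partner; case: eqP => [<- | /eqP ac_neq]; first exact: CRefl.
set P := fun r : relation2 n => (r.1 == (a, c)) || (r.2 == (a, c)).
have has_ac : has P rels by case: skew => _ _ /(_ a c ac_neq) count1; rewrite has_count count1.
set r := nth _ _ _.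
have r_in : r \in rels by rewrite mem_nth // -has_find.
have P_r : P r := nth_find _ has_ac.
clearbody r; case: r r_in P_r => [[p q] [p' q']] /congr_rel_relation /= pq_pq'.
case/orP=> /eqP[e1 e2]; rewrite {}e1 {}e2 in pq_pq' *; case: eqP => //= _.
- exact: CRefl.
- exact: CSym.
Qed.

Lemma right_nondegenerate_square : right_nondegenerate rels ->
  forall a b : 'I_n, exists c d : 'I_n, congr_rel rels [:: a; c] [:: b; d].
Proof.
move=> nondeg a b; have [c partner_b] := nondeg a b.
by exists c, (partner rels a c).2; rewrite -partner_b; apply: partner_congr.
Qed.

End SkewType.

Theorem lemma4p2 (n : nat) (rels : seq (relation2 n)) :
  skew_type rels -> right_nondegenerate rels ->
  forall x y : seq 'I_n, exists t w : seq 'I_n,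
    size w = size y /\ congr_rel rels (x ++ w) (y ++ t).
Proof.
move=> skew nondeg; apply: word_right_multiple.
exact: right_nondegenerate_square.
Qed.
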